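(* Let $\mathcal X$ be a Polish space with Borel $\sigma$-algebra and a $\sigma$-finite reference measure $\mathrm{d}x$, and let $\pi,\pi_Y$ be probability measures on $\mathcal X$ with densities (also denoted $\pi,\pi_Y$) such that $w=\pi/\pi_Y$ satisfies $|w|_\infty=\sup_{x}|w(x)|<\infty$. Let $\{Y_n\}_{n\ge 0}$ be any $\mathcal X$-valued stochastic process with $Y_0=y_0$, and for $n\ge1$ let $\hat\pi_{Y,n}=\frac1n\sum_{i=1}^n\delta_{Y_i}$ and \[ \hat\theta_n(\cdot)=\sum_{i=1}^n\frac{w(Y_i)}{\sum_{j=1}^n w(Y_j)}\delta_{Y_i}(\cdot),\qquad \eta_n(\cdot)=\mathbb E\,\hat\theta_n(\cdot). \] Then for all $n\ge1$, \[ \|\eta_n-\pi\|_{TV}\le B_n:=|w|_\infty\sup_{|f|\le1}\mathbb E\,\hat\pi_{Y,n}(\bar f)+2|w|_\infty^2\sup_{|f|\le1}\mathbb E\big(\hat\pi_{Y,n}(\bar f)\big)^2 . \]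
   Context: For a measurable $f:\mathcal X\to\mathbb R$, $\hat\pi_{Y,n}(\bar f):=\hat\pi_{Y,n}(f)-\pi_Y(f)$; suprema are over measurable $f$ with $|f|\le 1$. The total variation distance is $\|\mu-\nu\|_{TV}=\frac12\sup_{|f|\le1}|\mu(f)-\nu(f)|$. In the algorithm, $\eta_n$ is the conditional law of $X_{n+1}$ given that the resampling step is used at time $n+1$. *)

From mathcomp Require Import all_boot all_order all_algebra.
From mathcomp Require Import all_classical all_reals all_analysis.
Set Implicit Arguments. Unset Strict Implicit. Unset Printing Implicit Defensive.
Import Order.TTheory GRing.Theory Num.Theory numFieldNormedType.Exports.
Local Open Scope classical_set_scope.
Local Open Scope ring_scope.

Section Defs.
Context {d : measure_display} {X : measurableType d} {R : realType}.

Definition test_fun (f : X -> R) : Prop :=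
  measurable_fun setT f /\ forall x, `|f x| <= 1.

Definition supnorm (w : X -> R) : R := sup [set `|w x| | x in [set: X]].

Definition dens_int (mu : {measure set X -> \bar R}) (p f : X -> R) : R :=
  Rintegral mu setT (fun x => f x * p x).

Definition emp {Omega : Type} (Y : nat -> Omega -> X) (n : nat) (om : Omega)
  (f : X -> R) : R := n%:R^-1 * \sum_(1 <= i < n.+1) f (Y i om).

(* hat pi_{Y,n}(bar f) = hat pi_{Y,n}(f) - pi_Y(f) *)
Definition emp_c (mu : {measure set X -> \bar R}) (piY : X -> R)
  {Omega : Type} (Y : nat -> Omega -> X) (n : nat) (om : Omega) (f : X -> R) : R :=
  emp Y n om f - dens_int mu piY f.

(* hat theta_n(f) = sum_i w(Y_i)/(sum_j w(Y_j)) f(Y_i)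
   (with the MathComp convention x/0 = 0 if all weights vanish) *)
Definition thetahat (w : X -> R) {Omega : Type} (Y : nat -> Omega -> X)
  (n : nat) (om : Omega) (f : X -> R) : R :=
  \sum_(1 <= i < n.+1)
     (w (Y i om) / (\sum_(1 <= j < n.+1) w (Y j om))) * f (Y i om).

Definition Expect {dO : measure_display} {Omega : measurableType dO}
  (P : probability Omega R) (g : Omega -> R) : R := Rintegral P setT g.

Definition eta {dO : measure_display} {Omega : measurableType dO}
  (P : probability Omega R) (w : X -> R) (Y : nat -> Omega -> X) (n : nat)
  (f : X -> R) : R := Expect P (fun om => thetahat w Y n om f).

Definition tv_eta_pi {dO : measure_display} {Omega : measurableType dO}
  (P : probability Omega R) (mu : {measure set X -> \bar R}) (pi w : X -> R)
  (Y : nat -> Omega -> X) (n : nat) : R :=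
  2^-1 * sup [set `|eta P w Y n f - dens_int mu pi f| | f in test_fun].

Definition Bn {dO : measure_display} {Omega : measurableType dO}
  (P : probability Omega R) (mu : {measure set X -> \bar R}) (piY w : X -> R)
  (Y : nat -> Omega -> X) (n : nat) : R :=
  supnorm w * sup [set Expect P (fun om => emp_c mu piY Y n om f) | f in test_fun]
  + 2 * supnorm w ^+ 2 *
    sup [set Expect P (fun om => (emp_c mu piY Y n om f) ^+ 2) | f in test_fun].

End Defs.

From mathcomp Require Import all_boot all_order all_algebra.
From mathcomp Require Import all_classical all_reals all_analysis.
From mathcomp Require Import measurable_realfun.
From mathcomp Require Import ring lra.
Import Order.TTheory GRing.Theory Num.Theory numFieldNormedType.Exports.
Local Open Scope classical_set_scope.
Local Open Scope ring_scope.

(* For a test function f put a = pi(f) and g = w (f - a), so that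
   pi_Y(g) = 0 and pi_Y(w) = 1.  Pointwise, theta_n(f) - a = A / S with
   A = hat pi_{Y,n}(bar g) and S = hat pi_{Y,n}(w) = 1 + hat pi_{Y,n}(bar w).
   As |A / S| <= 2, the elementary estimate |A / S - A| <= A^2/4 + 3 (1 - S)^2
   linearizes the ratio; taking expectations, and rescaling g and w by 2|w|_oo
   and |w|_oo to test functions, gives
   |eta_n(f) - pi(f)| <= 2 |w|_oo sup E hat pi(bar f) + 4 |w|_oo^2 sup E hat pi(bar f)^2. *)

Section bounded_measurable.
Context {d : measure_display} {T : measurableType d} {R : realType}.

Definition bounded_measurable (g : T -> R) : Prop :=
  measurable_fun setT g /\ exists c : R, forall x, `|g x| <= c.

Lemma bounded_measurable_cst (k : R) : bounded_measurable (fun=> k).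
Proof. by split; [exact: measurable_cst | exists `|k|]. Qed.

Lemma bounded_measurableD {g1 g2 : T -> R} :
  bounded_measurable g1 -> bounded_measurable g2 ->
  bounded_measurable (fun x => g1 x + g2 x).
Proof.
move=> [m1 [c1 b1]] [m2 [c2 b2]]; split; first exact: measurable_funD.
by exists (c1 + c2) => x; apply: le_trans (ler_normD _ _) (lerD (b1 x) (b2 x)).
Qed.

Lemma bounded_measurableB {g1 g2 : T -> R} :
  bounded_measurable g1 -> bounded_measurable g2 ->
  bounded_measurable (fun x => g1 x - g2 x).
Proof.
move=> [m1 [c1 b1]] [m2 [c2 b2]]; split; first exact: measurable_funB.
by exists (c1 + c2) => x; apply: le_trans (ler_normB _ _) (lerD (b1 x) (b2 x)).
Qed.

Lemma bounded_measurableM {g1 g2 : T -> R} :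
  bounded_measurable g1 -> bounded_measurable g2 ->
  bounded_measurable (fun x => g1 x * g2 x).
Proof.
move=> [m1 [c1 b1]] [m2 [c2 b2]]; split; first exact: measurable_funM.
by exists (c1 * c2) => x; rewrite normrM; apply: ler_pM.
Qed.

Lemma bounded_measurableX2 {g : T -> R} :
  bounded_measurable g -> bounded_measurable (fun x => g x ^+ 2).
Proof.
move=> bg; have := bounded_measurableM bg bg.
by congr bounded_measurable; apply/funext => x; rewrite expr2.
Qed.

End bounded_measurable.

Section expectation.
Context {dO : measure_display} {Omega : measurableType dO} {R : realType}.
Variable P : probability Omega R.

Lemma bounded_measurable_integrable (g : Omega -> R) :
  bounded_measurable g -> P.-integrable setT (EFin \o g).
Proof.
move=> [mg [c gc]]; apply: measurable_bounded_integrable => //.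
  by apply: (@le_lt_trans _ _ 1%E); [exact: probability_le1 | exact: ltry].
exists c; split; first exact: num_real.
by move=> M cM x _ /=; apply: le_trans (gc x) (ltW cM).
Qed.

Lemma Expect_cst (k : R) : Expect P (fun=> k) = k.
Proof.
rewrite /Expect Rintegral_cst // (_ : fine _ = 1) ?mulr1 //.
exact: (congr1 fine (probability_setT P)).
Qed.

Lemma ExpectD (g1 g2 : Omega -> R) :
  bounded_measurable g1 -> bounded_measurable g2 ->
  Expect P (fun x => g1 x + g2 x) = Expect P g1 + Expect P g2.
Proof.
by move=> b1 b2; rewrite /Expect RintegralD //; exact: bounded_measurable_integrable.
Qed.

Lemma ExpectB (g1 g2 : Omega -> R) :
  bounded_measurable g1 -> bounded_measurable g2 ->
  Expect P (fun x => g1 x - g2 x) = Expect P g1 - Expect P g2.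
Proof.
by move=> b1 b2; rewrite /Expect RintegralB //; exact: bounded_measurable_integrable.
Qed.

Lemma ExpectZl (k : R) (g : Omega -> R) : bounded_measurable g ->
  Expect P (fun x => k * g x) = k * Expect P g.
Proof.
by move=> bg; rewrite /Expect RintegralZl //; exact: bounded_measurable_integrable.
Qed.

Lemma le_Expect (g1 g2 : Omega -> R) :
  bounded_measurable g1 -> bounded_measurable g2 ->
  (forall x, g1 x <= g2 x) -> Expect P g1 <= Expect P g2.
Proof.
by move=> b1 b2 le12; apply: le_Rintegral => //; exact: bounded_measurable_integrable.
Qed.

Lemma le_normr_Expect (g h : Omega -> R) :
  bounded_measurable g -> bounded_measurable h ->
  (forall x, `|g x| <= h x) -> `|Expect P g| <= Expect P h.
Proof.
move=> [mg [c gc]] bh gh.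
have bg : bounded_measurable g by split; last exists c.
apply: le_trans (le_normr_Rintegral _ _) _ => //.
  exact: bounded_measurable_integrable.
apply: le_Expect bh gh; split; first exact: measurableT_comp.
by exists c => x; rewrite normr_id.
Qed.

Lemma le_normr_Expect_cst (g : Omega -> R) (c : R) :
  measurable_fun setT g -> (forall x, `|g x| <= c) -> `|Expect P g| <= c.
Proof.
move=> mg gc; rewrite -[leRHS](Expect_cst c).
by apply: le_normr_Expect => //; [split; last exists c | exact: bounded_measurable_cst].
Qed.

End expectation.

Section density_integral.
Context {d : measure_display} {X : measurableType d} {R : realType}.
Variables (mu : {measure set X -> \bar R}) (p : X -> R).
Hypotheses (mp : measurable_fun setT p) (p_ge0 : forall x, 0 <= p x)
  (p_prob : (\int[mu]_x (p x)%:E = 1)%E).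

Lemma density_integrable : mu.-integrable setT (EFin \o p).
Proof.
apply/integrableP; split; first exact/measurable_EFinP.
rewrite (eq_integral (fun x => (p x)%:E)); first by rewrite p_prob ltry.
by move=> x _ /=; rewrite ger0_norm.
Qed.

Lemma dens_int_integrable (h : X -> R) (c : R) : measurable_fun setT h ->
  (forall x, `|h x| <= c) -> mu.-integrable setT (EFin \o (fun x => h x * p x)).
Proof.
move=> mh hc; have hb : [bounded h x | x in [set: X]].
  exists c; split; first exact: num_real.
  by move=> M cM x _ /=; apply: le_trans (hc x) (ltW cM).
have := integrableMr measurableT mh hb density_integrable.
by apply: eq_integrable => // x _ /=; rewrite EFinM.
Qed.

Lemma dens_int_cst (k : R) : dens_int mu p (fun=> k) = k.
Proof.
rewrite /dens_int RintegralZl //; last exact: density_integrable.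
by rewrite [Rintegral _ _ _]/Rintegral p_prob mulr1.
Qed.

Lemma dens_intZl (k : R) (h : X -> R) (c : R) : measurable_fun setT h ->
  (forall x, `|h x| <= c) ->
  dens_int mu p (fun x => k * h x) = k * dens_int mu p h.
Proof.
move=> mh hc; rewrite /dens_int -RintegralZl //; last exact: dens_int_integrable hc.
by apply: eq_Rintegral => x _; rewrite mulrA.
Qed.

Lemma dens_intBr (h : X -> R) (c k : R) : measurable_fun setT h ->
  (forall x, `|h x| <= c) -> dens_int mu p (fun x => h x - k) = dens_int mu p h - k.
Proof.
move=> mh hc; rewrite -[in RHS](dens_int_cst k) /dens_int -RintegralB //.
- by apply: eq_Rintegral => x _; rewrite mulrBl.
- exact: dens_int_integrable hc.
- by apply: (@dens_int_integrable _ `|k|) => //; exact: measurable_cst.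
Qed.

Lemma le_normr_dens_int (h : X -> R) (c : R) : measurable_fun setT h ->
  (forall x, `|h x| <= c) -> `|dens_int mu p h| <= c.
Proof.
move=> mh hc; rewrite -[leRHS](dens_int_cst c) /dens_int.
apply: le_trans (le_normr_Rintegral _ _) _ => //; first exact: dens_int_integrable hc.
apply: le_Rintegral => //.
- by have := integrable_norm (dens_int_integrable _ _ mh hc); apply: eq_integrable.
- by apply: (@dens_int_integrable _ `|c|) => //; exact: measurable_cst.
- by move=> x _; rewrite normrM (ger0_norm (p_ge0 x)) ler_wpM2r.
Qed.

End density_integral.

Lemma dens_int_reweight {d : measure_display} {X : measurableType d} {R : realType}
    (mu : {measure set X -> \bar R}) (p q w h : X -> R) :
  (forall x, q x = w x * p x) ->
  dens_int mu p (fun x => w x * h x) = dens_int mu q h.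
Proof. by move=> qE; apply: eq_Rintegral => x _; rewrite qE mulrCA mulrA. Qed.

(* D - A = A (1 - S) + D (1 - S)^2: bound the first term by AM-GM and the
   second one using |D| <= 2. *)
Lemma ratio_linearization {R : realFieldType} (A D S : R) :
  A = D * S -> `|D| <= 2 -> `|D - A| <= 4^-1 * A ^+ 2 + 3 * (1 - S) ^+ 2.
Proof.
move=> AE; rewrite ler_norml => /andP[D_ge D_le].
have DE : D - A = A * (1 - S) + D * (1 - S) ^+ 2 by rewrite AE; ring.
have amgm1 : 0 <= (A / 2 - (1 - S)) ^+ 2 := sqr_ge0 _.
have amgm2 : 0 <= (A / 2 + (1 - S)) ^+ 2 := sqr_ge0 _.
have sq_ge0 : 0 <= (1 - S) ^+ 2 := sqr_ge0 _.
rewrite DE ler_norml; apply/andP; split; nra.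
Qed.

Section empirical.
Context {d : measure_display} {X : measurableType d} {R : realType}.
Context {dO : measure_display} {Omega : measurableType dO}.
Variables (Y : nat -> Omega -> X) (n : nat).

Lemma measurable_emp (h : X -> R) : (forall k, measurable_fun setT (Y k)) ->
  measurable_fun setT h -> measurable_fun setT (fun om => emp Y n om h).
Proof.
move=> mY mh; apply: measurable_funM; first exact: measurable_cst.
by apply: measurable_sum => i; exact: measurableT_comp.
Qed.

Lemma le_normr_emp (h : X -> R) (c : R) om : (1 <= n)%N ->
  (forall x, `|h x| <= c) -> `|emp Y n om h| <= c.
Proof.
move=> n_gt0 hc; rewrite /emp normrM ger0_norm ?invr_ge0 //.
apply: le_trans (ler_wpM2l _ (ler_norm_sum _ _ _)) _; first by rewrite invr_ge0.
apply: le_trans (ler_wpM2l _ (ler_sum _ (fun i _ => hc (Y i om)))) _.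
  by rewrite invr_ge0.
rewrite sumr_const_nat subn1 /= -[c *+ n]mulr_natl mulKf //.
by rewrite pnatr_eq0 -lt0n.
Qed.

Lemma empZl (h : X -> R) (k : R) om :
  emp Y n om (fun x => k * h x) = k * emp Y n om h.
Proof. by rewrite /emp -mulr_sumr mulrCA. Qed.

Lemma thetahatE (w f : X -> R) om : thetahat w Y n om f =
  (\sum_(1 <= i < n.+1) w (Y i om) * f (Y i om)) / \sum_(1 <= i < n.+1) w (Y i om).
Proof. by rewrite /thetahat mulr_suml; apply: eq_bigr => i _; rewrite mulrAC. Qed.

Lemma le_normr_thetahat (w f : X -> R) om : (forall x, 0 <= w x) ->
  (forall x, `|f x| <= 1) -> `|thetahat w Y n om f| <= 1.
Proof.
move=> w_ge0 f1; rewrite thetahatE normrM.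
set s := \sum_(_ <= i < _) w (Y i om).
have s_ge0 : 0 <= s by apply: sumr_ge0.
have [->|s_neq0] := eqVneq s 0; first by rewrite invr0 normr0 mulr0.
rewrite [`|s^-1|]ger0_norm ?invr_ge0 // ler_pdivrMr ?mul1r; last first.
  by rewrite lt_neqAle eq_sym s_neq0.
apply: le_trans (ler_norm_sum _ _ _) _; apply: ler_sum => i _.
by rewrite normrM ger0_norm // ler_piMr.
Qed.

(* With s = sum_j w(Y_j) this says (sum_i w(Y_i) f(Y_i) / s - a) s / n
   = sum_i w(Y_i) (f(Y_i) - a) / n, which also holds when s = 0, as then
   every w(Y_i) vanishes. *)
Lemma thetahat_subr_mul_emp (w f : X -> R) (a : R) om : (forall x, 0 <= w x) ->
  (thetahat w Y n om f - a) * emp Y n om w = emp Y n om (fun x => w x * (f x - a)).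
Proof.
move=> w_ge0; rewrite thetahatE /emp mulrCA; congr (_ * _).
set s := \sum_(_ <= i < _) w (Y i om).
have [s0|s_neq0] := eqVneq s 0.
  move: (s0) => /eqP; rewrite (psumr_eq0 _ (fun i _ => w_ge0 (Y i om))) => /allP w0.
  by rewrite s0 mulr0 big_seq big1 // => i /w0 /eqP ->; rewrite mul0r.
by rewrite mulrBl divfK // mulr_sumr -sumrB; apply: eq_bigr => i _; ring.
Qed.

Lemma measurable_thetahat (w f : X -> R) : (forall k, measurable_fun setT (Y k)) ->
  measurable_fun setT w -> measurable_fun setT f -> (forall x, 0 <= w x) ->
  measurable_fun setT (fun om => thetahat w Y n om f).
Proof.
move=> mY mw mf w_ge0.
(* [powR _ (-1)] coincides with [^-1] on nonnegative reals and is known to be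
   measurable. *)
have msum (h : X -> R) : measurable_fun setT h ->
    measurable_fun setT (fun om => \sum_(1 <= i < n.+1) h (Y i om)).
  by move=> mh; apply: measurable_sum => i; exact: measurableT_comp.
rewrite (_ : (fun om => _) = fun om =>
  (\sum_(1 <= i < n.+1) w (Y i om) * f (Y i om)) *
  powR (\sum_(1 <= i < n.+1) w (Y i om)) (-1)).
  apply: measurable_funM; first exact: msum (measurable_funM mw mf).
  by apply: (measurableT_comp (f := @powR R ^~ (-1))) => //; exact: msum.
apply/funext => om; rewrite powR_inv1; last exact: sumr_ge0.
by rewrite thetahatE.
Qed.

End empirical.

Section self_normalized_bias.
Context {d : measure_display} {X : measurableType d} {R : realType}.
Variables (mu : {measure set X -> \bar R}) (piY : X -> R).
Hypotheses (mpiY : measurable_fun setT piY) (piY_ge0 : forall x, 0 <= piY x)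
  (piY_prob : (\int[mu]_x (piY x)%:E = 1)%E).
Context {dO : measure_display} {Omega : measurableType dO}.
Variables (P : probability Omega R) (Y : nat -> Omega -> X) (n : nat).
Hypotheses (mY : forall k, measurable_fun setT (Y k)) (n_gt0 : (1 <= n)%N).

Local Notation bias_sup :=
  (sup [set Expect P (fun om => emp_c mu piY Y n om f) | f in test_fun]).
Local Notation mse_sup :=
  (sup [set Expect P (fun om => emp_c mu piY Y n om f ^+ 2) | f in test_fun]).

Lemma le_normr_emp_c {h : X -> R} {c : R} om : measurable_fun setT h ->
  (forall x, `|h x| <= c) -> `|emp_c mu piY Y n om h| <= c + c.
Proof.
move=> mh hc; apply: le_trans (ler_normB _ _) _.
exact: lerD (le_normr_emp _ _ _ _ _ n_gt0 hc)
  (le_normr_dens_int _ _ mpiY piY_ge0 piY_prob _ _ mh hc).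
Qed.

Lemma bounded_measurable_emp_c {h : X -> R} {c : R} : measurable_fun setT h ->
  (forall x, `|h x| <= c) -> bounded_measurable (fun om => emp_c mu piY Y n om h).
Proof.
move=> mh hc; split; last by exists (c + c) => om; exact: le_normr_emp_c.
by apply: measurable_funB; [exact: measurable_emp | exact: measurable_cst].
Qed.

Lemma emp_cZl {h : X -> R} {c : R} (k : R) om : measurable_fun setT h ->
  (forall x, `|h x| <= c) ->
  emp_c mu piY Y n om (fun x => k * h x) = k * emp_c mu piY Y n om h.
Proof.
move=> mh hc.
by rewrite /emp_c empZl (dens_intZl _ _ mpiY piY_ge0 piY_prob k _ _ mh hc) mulrBr.
Qed.

Lemma Expect_emp_c_le_sup {f : X -> R} : test_fun f ->
  Expect P (fun om => emp_c mu piY Y n om f) <= bias_sup.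
Proof.
move=> tf; apply: ub_le_sup; last by exists f.
exists (1 + 1) => _ [g [mg g1] <-]; apply: le_trans (ler_norm _) _.
have [mE _] := bounded_measurable_emp_c mg g1.
by apply: le_normr_Expect_cst mE _ => om; exact: le_normr_emp_c.
Qed.

Lemma Expect_sqr_emp_c_le_sup {f : X -> R} : test_fun f ->
  Expect P (fun om => emp_c mu piY Y n om f ^+ 2) <= mse_sup.
Proof.
move=> tf; apply: ub_le_sup; last by exists f.
exists ((1 + 1) ^+ 2) => _ [g [mg g1] <-]; apply: le_trans (ler_norm _) _.
have [mE2 _] := bounded_measurableX2 (bounded_measurable_emp_c mg g1).
apply: le_normr_Expect_cst mE2 _ => om; rewrite normrX.
by have := le_normr_emp_c om mg g1; have := normr_ge0 (emp_c mu piY Y n om g); nra.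
Qed.

Lemma le_normr_Expect_emp_c_sup {f : X -> R} : test_fun f ->
  `|Expect P (fun om => emp_c mu piY Y n om f)| <= bias_sup.
Proof.
move=> [mf f1]; rewrite ler_norml Expect_emp_c_le_sup // andbT lerNl.
have tNf : test_fun (fun x => -1 * f x).
  by split; [exact: measurable_funM | move=> x; rewrite mulN1r normrN].
have := Expect_emp_c_le_sup tNf.
under eq_fun => om do rewrite (emp_cZl _ _ mf f1).
by rewrite ExpectZl ?mulN1r //; exact: bounded_measurable_emp_c mf f1.
Qed.

Lemma test_fun_scale {g : X -> R} {c : R} : 0 < c -> measurable_fun setT g ->
  (forall x, `|g x| <= c) -> test_fun (fun x => c^-1 * g x).
Proof.
move=> c_gt0 mg gc; split; first exact: measurable_funM.
by move=> x; rewrite normrM gtr0_norm ?invr_gt0 // ler_pdivrMl ?mulr1.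
Qed.

Lemma emp_c_scale {g : X -> R} {c : R} om : 0 < c -> measurable_fun setT g ->
  (forall x, `|g x| <= c) ->
  emp_c mu piY Y n om g = c * emp_c mu piY Y n om (fun x => c^-1 * g x).
Proof.
move=> c_gt0 mg gc; have [mh h1] := test_fun_scale c_gt0 mg gc.
rewrite -(emp_cZl _ _ mh h1); congr emp_c.
by apply/funext => x; rewrite mulrA divff ?mul1r // gt_eqF.
Qed.

Lemma le_normr_Expect_emp_c {g : X -> R} {c : R} : 0 < c ->
  measurable_fun setT g -> (forall x, `|g x| <= c) ->
  `|Expect P (fun om => emp_c mu piY Y n om g)| <= c * bias_sup.
Proof.
move=> c_gt0 mg gc; have [mh h1] := test_fun_scale c_gt0 mg gc.
under eq_fun => om do rewrite (emp_c_scale om c_gt0 mg gc).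
rewrite ExpectZl; last exact: bounded_measurable_emp_c mh h1.
by rewrite normrM gtr0_norm // ler_pM2l //; exact: le_normr_Expect_emp_c_sup.
Qed.

Lemma Expect_sqr_emp_c_le {g : X -> R} {c : R} : 0 < c ->
  measurable_fun setT g -> (forall x, `|g x| <= c) ->
  Expect P (fun om => emp_c mu piY Y n om g ^+ 2) <= c ^+ 2 * mse_sup.
Proof.
move=> c_gt0 mg gc; have [mh h1] := test_fun_scale c_gt0 mg gc.
under eq_fun => om do rewrite (emp_c_scale om c_gt0 mg gc) exprMn.
rewrite ExpectZl; last exact/bounded_measurableX2/(bounded_measurable_emp_c mh h1).
by apply: ler_wpM2l; [exact: sqr_ge0 | exact: Expect_sqr_emp_c_le_sup].
Qed.

Variables (pi w : X -> R).
Hypotheses (mpi : measurable_fun setT pi) (pi_ge0 : forall x, 0 <= pi x)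
  (pi_prob : (\int[mu]_x (pi x)%:E = 1)%E)
  (mw : measurable_fun setT w) (w_ge0 : forall x, 0 <= w x)
  (w_ratio : forall x, pi x = w x * piY x).
Variables (W : R).
Hypotheses (W_gt0 : 0 < W) (wW : forall x, `|w x| <= W).

Local Notation centered_weight f := (fun x => w x * (f x - dens_int mu pi f)).

Lemma dens_int_weight : dens_int mu piY w = 1.
Proof.
rewrite (_ : w = fun x => w x * 1); last by apply/funext => x; rewrite mulr1.
by rewrite (dens_int_reweight _ _ _ _ (fun=> 1) w_ratio) dens_int_cst.
Qed.

Lemma dens_int_centered_weight {f : X -> R} : test_fun f ->
  dens_int mu piY (centered_weight f) = 0.
Proof.
move=> [mf f1]; rewrite (dens_int_reweight _ _ _ _ _ w_ratio).
by rewrite (dens_intBr _ _ mpi pi_ge0 pi_prob _ _ _ mf f1) subrr.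
Qed.

Lemma centered_weight_le {f : X -> R} : test_fun f ->
  measurable_fun setT (centered_weight f) /\
  forall x, `|centered_weight f x| <= W * 2.
Proof.
move=> [mf f1]; split.
  by apply: measurable_funM => //; apply: measurable_funB => //; exact: measurable_cst.
move=> x; rewrite normrM; apply: ler_pM => //.
have := le_normr_dens_int _ _ mpi pi_ge0 pi_prob _ _ mf f1.
by have := ler_normB (f x) (dens_int mu pi f); have := f1 x; lra.
Qed.

Lemma emp_c_centered_weightE {f : X -> R} om : test_fun f ->
  emp_c mu piY Y n om (centered_weight f) =
  (thetahat w Y n om f - dens_int mu pi f) * (1 + emp_c mu piY Y n om w).
Proof.
move=> tf; rewrite /emp_c dens_int_centered_weight // dens_int_weight.
by rewrite subr0 [1 + _]addrC subrK thetahat_subr_mul_emp.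
Qed.

Lemma le_normr_eta_sub_linearized {f : X -> R} : test_fun f ->
  `|eta P w Y n f - dens_int mu pi f| <=
    `|Expect P (fun om => emp_c mu piY Y n om (centered_weight f))|
    + 4^-1 * Expect P (fun om => emp_c mu piY Y n om (centered_weight f) ^+ 2)
    + 3 * Expect P (fun om => emp_c mu piY Y n om w ^+ 2).
Proof.
move=> tf; have [mf f1] := tf; have [mg g_le] := centered_weight_le tf.
pose A om := emp_c mu piY Y n om (centered_weight f).
pose V om := emp_c mu piY Y n om w.
pose D om := thetahat w Y n om f - dens_int mu pi f.
have bA : bounded_measurable A := bounded_measurable_emp_c mg g_le.
have bV : bounded_measurable V := bounded_measurable_emp_c mw wW.
have bT : bounded_measurable (fun om => thetahat w Y n om f).
  split; first exact: measurable_thetahat.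
  by exists 1 => om; exact: le_normr_thetahat.
have bD : bounded_measurable D := bounded_measurableB bT (bounded_measurable_cst _).
have lin om : `|D om - A om| <= 4^-1 * A om ^+ 2 + 3 * V om ^+ 2.
  have D_le : `|D om| <= 2.
    have := le_normr_dens_int _ _ mpi pi_ge0 pi_prob _ _ mf f1.
    have := ler_normB (thetahat w Y n om f) (dens_int mu pi f).
    by have := le_normr_thetahat Y n _ _ om w_ge0 f1; lra.
  have := ratio_linearization _ _ _ (emp_c_centered_weightE om tf) D_le.
  by rewrite (_ : 1 - (1 + V om) = - V om) ?sqrrN //; ring.
have -> : eta P w Y n f - dens_int mu pi f = Expect P D.
  by rewrite /D ExpectB ?Expect_cst //; exact: bounded_measurable_cst.
have bA2 := bounded_measurableX2 bA; have bV2 := bounded_measurableX2 bV.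
have bR : bounded_measurable (fun om => 4^-1 * A om ^+ 2 + 3 * V om ^+ 2).
  by apply: bounded_measurableD; apply: bounded_measurableM => //;
    exact: bounded_measurable_cst.
rewrite -addrA -(ExpectZl _ _ _ bA2) -(ExpectZl _ _ _ bV2) -ExpectD; last 2 first.
- exact: bounded_measurableM (bounded_measurable_cst _) bA2.
- exact: bounded_measurableM (bounded_measurable_cst _) bV2.
rewrite -(subrK (Expect P A) (Expect P D)) -ExpectB //.
apply: le_trans (ler_normD _ _) _; rewrite addrC lerD2r.
exact: le_normr_Expect (bounded_measurableB bD bA) bR lin.
Qed.

Lemma le_normr_eta_sub_dens_int {f : X -> R} : test_fun f ->
  `|eta P w Y n f - dens_int mu pi f| <= 2 * (W * bias_sup + 2 * W ^+ 2 * mse_sup).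
Proof.
move=> tf; have [mg g_le] := centered_weight_le tf.
have W2_gt0 : 0 < W * 2 by rewrite mulr_gt0.
have EA := le_normr_Expect_emp_c W2_gt0 mg g_le.
have EA2 := Expect_sqr_emp_c_le W2_gt0 mg g_le.
have EV2 := Expect_sqr_emp_c_le W_gt0 mw wW.
apply: le_trans (le_normr_eta_sub_linearized tf) _.
rewrite exprMn in EA2; nra.
Qed.
End self_normalized_bias.

Lemma le_supnorm {d : measure_display} {X : measurableType d} {R : realType}
    (w : X -> R) : (exists M : R, forall x, `|w x| <= M) ->
  forall x, `|w x| <= supnorm w.
Proof.
move=> [M wM] x; apply: ub_le_sup; last by exists x.
by exists M => _ [y _ <-].
Qed.

Theorem lemma1 (d : measure_display) (X : measurableType d) (R : realType)
  (mu : {measure set X -> \bar R}) (hmu : sigma_finite setT mu)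
  (pi piY w : X -> R)
  (mpi : measurable_fun setT pi) (mpiY : measurable_fun setT piY)
  (pi_ge0 : forall x, 0 <= pi x) (piY_ge0 : forall x, 0 <= piY x)
  (pi_prob : (\int[mu]_x (pi x)%:E = 1)%E)
  (piY_prob : (\int[mu]_x (piY x)%:E = 1)%E)
  (mw : measurable_fun setT w) (w_ge0 : forall x, 0 <= w x)
  (w_ratio : forall x, pi x = w x * piY x)
  (w_bounded : exists M : R, forall x, `|w x| <= M)
  (dO : measure_display) (Omega : measurableType dO) (P : probability Omega R)
  (Y : nat -> Omega -> X) (mY : forall k, measurable_fun setT (Y k))
  (y0 : X) (hY0 : forall om, Y 0%N om = y0)
  (n : nat) (hn : (1 <= n)%N) :
  tv_eta_pi P mu pi w Y n <= Bn P mu piY w Y n.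
Proof.
have wW := le_supnorm _ w_bounded.
have W_gt0 : 0 < supnorm w.
  rewrite ltNge; apply/negP => W_le0.
  have w0 x : w x = 0.
    by apply/eqP; rewrite -normr_le0 (le_trans (wW x)).
  have : (\int[mu]_x (pi x)%:E = \int[mu]_x (0:R)%:E)%E.
    by apply: eq_integral => x _; rewrite w_ratio w0 mul0r.
  by rewrite integral0 pi_prob => /eqP; rewrite onee_eq0.
rewrite /tv_eta_pi /Bn -ler_pdivlMl ?invr_gt0 // invrK.
apply: ge_sup.
  exists `|eta P w Y n (fun=> 0) - dens_int mu pi (fun=> 0)|, (fun=> 0) => //.
  by split; [exact: measurable_cst | move=> x; rewrite normr0].
move=> _ [f tf <-].
exact: le_normr_eta_sub_dens_int.
Qed.
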